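(* $|\mathrm{GHZ}\rangle^{\otimes 3}\stackrel{\textrm{SLOCC}}{\longrightarrow}|W\rangle^{\otimes 2}$, where $|\mathrm{GHZ}\rangle=\frac{1}{\sqrt2}(|000\rangle+|111\rangle)$ and $|W\rangle=\frac{1}{\sqrt3}(|001\rangle+|010\rangle+|100\rangle)$ are three-qubit states shared by parties $A,B,C$ (in each ket the first qubit belongs to $A$, the second to $B$, the third to $C$), and tensor powers are taken with each party holding its own qubits from all copies.
   Context: For tripartite states, $|\psi\rangle\stackrel{\textrm{SLOCC}}{\longrightarrow}|\phi\rangle$ means that $|\psi\rangle$ can be transformed into $|\phi\rangle$ with nonzero success probability by local operations of the three parties and classical communication; equivalently, there exist linear operators $A,B,C$ on the respective parties' spaces with $(A\otimes B\otimes C)|\psi\rangle=|\phi\rangle$ up to a nonzero scalar. *)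

(* Scalars: an arbitrary numClosedFieldType C (e.g. algC, or
   complex R for R : rcfType), which covers the complex numbers. *)
From HB Require Import structures.
From mathcomp Require Import all_boot all_order all_algebra.
Set Implicit Arguments. Unset Strict Implicit. Unset Printing Implicit Defensive.
Import Order.TTheory GRing.Theory Num.Theory.
Local Open Scope ring_scope.

(* A tripartite state (vector in C^IA (x) C^IB (x) C^IC), given by its
   coefficients in the product computational basis. *)
Definition tri_state (C : Type) (IA IB IC : finType) := IA -> IB -> IC -> C.

Definition GHZ (C : numClosedFieldType) : tri_state C 'I_2 'I_2 'I_2 :=
  fun i j k => if (i == j) && (j == k) then (sqrtC 2)^-1 else 0.

Definition W (C : numClosedFieldType) : tri_state C 'I_2 'I_2 'I_2 :=
  fun i j k => if (i + j + k == 1)%N then (sqrtC 3)^-1 else 0.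

(* n-fold tensor power of a three-qubit state, each party holding its own n
   qubits: party X's local basis index is a word {ffun 'I_n -> 'I_2}, whose
   k-th letter is X's qubit from copy k. *)
Definition tpow {C : numClosedFieldType} (n : nat) (psi : tri_state C 'I_2 'I_2 'I_2)
  : tri_state C {ffun 'I_n -> 'I_2} {ffun 'I_n -> 'I_2} {ffun 'I_n -> 'I_2} :=
  fun a b c => \prod_(k < n) psi (a k) (b k) (c k).

Definition SLOCC {C : numClosedFieldType} {IA IB IC JA JB JC : finType}
  (psi : tri_state C IA IB IC) (phi : tri_state C JA JB JC) : Prop :=
  exists (A : JA -> IA -> C) (B : JB -> IB -> C) (Cop : JC -> IC -> C) (lam : C),
    lam != 0 /\
    forall a' b' c',
      \sum_(a : IA) \sum_(b : IB) \sum_(c : IC)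
         A a' a * B b' b * Cop c' c * psi a b c = lam * phi a' b' c'.

Arguments tpow {C} n psi _ _ _.

From mathcomp Require Import all_boot all_order all_algebra.
From mathcomp Require Import ring.
Set Implicit Arguments. Unset Strict Implicit. Unset Printing Implicit Defensive.
Import Order.TTheory GRing.Theory Num.Theory.
Local Open Scope ring_scope.

(* GHZ^(x)3 is, up to a scalar, the unit tensor on the 8 = 2^3 words of
   length 3.  A tensor admitting a decomposition into r product terms is
   reached from the unit tensor of size r by local maps: each party sends its
   t-th basis vector to its factor of the t-th term.  So it suffices that
   W^(x)2 has tensor rank at most 8; in fact it has an explicit decomposition
   into 7 product terms. *)

Section Tensors.
Variable C : numClosedFieldType.

Lemma tpow_GHZ_diag n a b c :
  tpow n (@GHZ C) a b c = if (a == b) && (b == c) then (sqrtC 2)^-1 ^+ n else 0.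
Proof.
rewrite /tpow /GHZ; case: ifP => [/andP[/eqP<- /eqP<-]|neq].
  by rewrite (eq_bigr (fun=> (sqrtC 2)^-1)) ?prodr_const ?card_ord // => k; rewrite !eqxx.
have /existsP[k /negPf nk] : [exists k, ~~ ((a k == b k) && (b k == c k))].
  apply: contraFT neq => /existsPn eq_abc.
  apply/andP; split; apply/eqP/ffunP => k;
    by have /negPn/andP[/eqP ab /eqP bc] := eq_abc k; rewrite ?ab ?bc.
by rewrite (bigD1 k) //= nk mul0r.
Qed.

Lemma sum_unit_tensor (T : finType) (F : T -> T -> C) (a : T) (g : C) :
  \sum_b \sum_c F b c * (if (a == b) && (b == c) then g else 0) = F a a * g.
Proof.
rewrite (bigD1 a) //= [X in _ + X]big1 => [|b /negPf ab]; last first.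
  by apply: big1 => c _; rewrite eq_sym ab mulr0.
rewrite addr0 (bigD1 a) //= eqxx big1 ?addr0 // => c /negPf ac.
by rewrite eq_sym ac mulr0.
Qed.

Lemma SLOCC_unit_tensor (T I JA JB JC : finType) (psi : tri_state C T T T)
    (phi : tri_state C JA JB JC) (g : C) (d : I -> C)
    (u : I -> JA -> C) (v : I -> JB -> C) (w : I -> JC -> C) :
  g != 0 -> #|T| = #|I| ->
  (forall a b c, psi a b c = if (a == b) && (b == c) then g else 0) ->
  (forall a' b' c', phi a' b' c' = \sum_i d i * u i a' * v i b' * w i c') ->
  SLOCC psi phi.
Proof.
move=> g_nz cardTI psiE phiE.
pose h (t : T) : I := enum_val (cast_ord cardTI (enum_rank t)).
have h_bij : bijective h.
  exists (fun i => enum_val (cast_ord (esym cardTI) (enum_rank i))) => x.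
    by rewrite /h enum_valK cast_ordK enum_rankK.
  by rewrite /h enum_valK cast_ordKV enum_rankK.
exists (fun a' t => d (h t) * u (h t) a'), (fun b' t => v (h t) b'),
  (fun c' t => w (h t) c'), g; split=> // a' b' c'.
rewrite (eq_bigr (fun a => d (h a) * u (h a) a' * v (h a) b' * w (h a) c' * g)).
  by rewrite -big_distrl mulrC phiE (reindex h) //; apply: onW_bij.
move=> a _; rewrite -(sum_unit_tensor (fun b c => d (h a) * u (h a) a' * v (h b) b' * w (h c) c')).
by apply: eq_bigr => b _; apply: eq_bigr => c _; rewrite psiE.
Qed.

Definition W2_coef (i : nat) : C :=
  match i with 0 | 1 => 1 | 2 | 3 => -1 | 4 => 2 | 5 => -2 | 6 => -4 | _ => 0 end.

(* On a pair of qubits (x, y): terms 0-3 are s t (e00 + s e10 + t e01)^(x)3 for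
   s, t = +-1, which sum to 4 times the symmetrization of e00 (x) e10 (x) e01;
   terms 4-6 are 2 (e00 + e11)^(x)3 - 2 (e00 - e11)^(x)3 - 4 e11^(x)3, i.e. 4
   times the symmetrization of e00 (x) e00 (x) e11.  Term 7 is zero. *)
Definition W2_vec (i x y : nat) : C :=
  match i, x, y with
  | 0, 0, 0 => 1 | 0, 1, 0 => 1 | 0, 0, 1 => 1
  | 1, 0, 0 => 1 | 1, 1, 0 => -1 | 1, 0, 1 => -1
  | 2, 0, 0 => 1 | 2, 1, 0 => 1 | 2, 0, 1 => -1
  | 3, 0, 0 => 1 | 3, 1, 0 => -1 | 3, 0, 1 => 1
  | 4, 0, 0 => 1 | 4, 1, 1 => 1
  | 5, 0, 0 => 1 | 5, 1, 1 => -1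
  | 6, 1, 1 => 1
  | _, _, _ => 0
  end.

Lemma W2_terms_sum (x0 x1 y0 y1 z0 z1 : 'I_2) :
  \sum_(i < 8) W2_coef i * W2_vec i x0 x1 * W2_vec i y0 y1 * W2_vec i z0 z1 =
  4 * ((if (x0 + y0 + z0 == 1)%N then 1 else 0) * (if (x1 + y1 + z1 == 1)%N then 1 else 0)).
Proof.
rewrite !big_ord_recr big_ord0 /=.
by case: x0 x1 y0 y1 z0 z1 => [[|[|//]] ?] [[|[|//]] ?] [[|[|//]] ?] [[|[|//]] ?] [[|[|//]] ?] [[|[|//]] ?] /=; ring.
Qed.

Lemma tpow2_W_decomposition a b c : tpow 2 (@W C) a b c =
  \sum_(i < 8) 12^-1 * W2_coef i * W2_vec i (a 0) (a 1) * W2_vec i (b 0) (b 1) * W2_vec i (c 0) (c 1).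
Proof.
transitivity (12^-1 * \sum_(i < 8)
    W2_coef i * W2_vec i (a 0) (a 1) * W2_vec i (b 0) (b 1) * W2_vec i (c 0) (c 1)); last first.
  by rewrite mulr_sumr; apply: eq_bigr => i _; rewrite !mulrA.
rewrite W2_terms_sum /tpow /W big_ord_recl big_ord1.
have inv3 : (sqrtC 3)^-1 * (sqrtC 3)^-1 = 3^-1 :> C by rewrite -invfM -expr2 sqrtCK.
have -> : lift ord0 ord0 = 1 :> 'I_2 by apply: val_inj.
by case: ifP => _; case: ifP => _; rewrite ?(mulr0, mul0r, mulr1) // inv3; field.
Qed.
End Tensors.

Theorem theorem1 (C : numClosedFieldType) :
  SLOCC (tpow 3 (@GHZ C)) (tpow 2 (@W C)).
Proof.
apply: (SLOCC_unit_tensor (g := (sqrtC 2)^-1 ^+ 3)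
          (d := fun i : 'I_8 => 12^-1 * W2_coef C i)
          (u := fun (i : 'I_8) (a : {ffun 'I_2 -> 'I_2}) => W2_vec C i (a 0) (a 1))
          (v := fun (i : 'I_8) (b : {ffun 'I_2 -> 'I_2}) => W2_vec C i (b 0) (b 1))
          (w := fun (i : 'I_8) (c : {ffun 'I_2 -> 'I_2}) => W2_vec C i (c 0) (c 1))).
- by rewrite expf_neq0 // invr_eq0 sqrtC_eq0 pnatr_eq0.
- by rewrite card_ffun !card_ord.
- exact: tpow_GHZ_diag.
- exact: tpow2_W_decomposition.
Qed.
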